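(* Let $G$ be a directed graph with vertices $s,t$ and $k\ge1$. The function $\hat d_{\mathrm{sum}}:U^k_{\mathrm{lr}}\to\mathbb N$, $\hat d_{\mathrm{sum}}(C)=\sum_{e\in E_{\mathrm{shr}}(C)}\binom{\mu_e(C)}{2}$, is submodular on the lattice $L^*$, i.e. $\hat d_{\mathrm{sum}}(C_1\vee C_2)+\hat d_{\mathrm{sum}}(C_1\wedge C_2)\le\hat d_{\mathrm{sum}}(C_1)+\hat d_{\mathrm{sum}}(C_2)$ for all $C_1,C_2\in L^*$.
   Context: An $s$-$t$ cut of a directed graph $G$ is a set $X\subseteq E(G)$ such that removing $X$ leaves no directed $s$-$t$ path; $\Gamma_G(s,t)$ is the set of $s$-$t$ cuts of minimum cardinality. Fix a maximum-size collection $\mathcal P$ of pairwise edge-disjoint directed $s$-$t$ paths (each minimum $s$-$t$ cut contains exactly one edge of each path in $\mathcal P$). For $X,Y\in\Gamma_G(s,t)$, $S_{\min}(X\cup Y)$ (resp. $S_{\max}(X\cup Y)$) consists, for each $p\in\mathcal P$, of the edge of $(X\cup Y)\cap p$ occurring first (resp. last) along $p$. $X\le Y$ means every directed $s$-$t$ path meets an edge of $X$ at or before an edge of $Y$. $U^k_{\mathrm{lr}}$ is the set of $k$-tuples $[X_1,\dots,X_k]$ of elements of $\Gamma_G(s,t)$ with $X_i\le X_j$ for all $i<j$. $L^*$ is the lattice on $U^k_{\mathrm{lr}}$ with componentwise order, join $[X_i]_i\vee[Y_i]_i=[S_{\max}(X_i\cup Y_i)]_i$ and meet $[X_i]_i\wedge[Y_i]_i=[S_{\min}(X_i\cup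 Y_i)]_i$. For $C=[X_1,\dots,X_k]$, $\mu_e(C)$ is the number of indices $i$ with $e\in X_i$, and $E_{\mathrm{shr}}(C)=\{e\in E(G):\mu_e(C)\ge2\}$. *)

From mathcomp Require Import all_boot.
Set Implicit Arguments. Unset Strict Implicit. Unset Printing Implicit Defensive.

Section MinCuts.
Variables (V E : finType) (src tgt : E -> V) (s t : V).

Fixpoint walk_from (x : V) (p : seq E) : bool :=
  if p is e :: p' then (src e == x) && walk_from (tgt e) p' else true.

Definition st_path (p : seq E) : bool :=
  [&& walk_from s p, last s (map tgt p) == t & uniq (s :: map tgt p)].

Definition st_cut (X : {set E}) : Prop :=
  forall p, st_path p -> exists2 e, e \in p & e \in X.

Definition min_st_cut (X : {set E}) : Prop :=
  st_cut X /\ forall Y : {set E}, st_cut Y -> #|X| <= #|Y|.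

Definition cut_le (X Y : {set E}) : Prop :=
  forall p, st_path p ->
    exists x y, [/\ x \in p, y \in p, x \in X, y \in Y & index x p <= index y p].

Definition edge_disjoint_paths (P : seq (seq E)) : Prop :=
  (forall p, p \in P -> st_path p) /\
  (forall i j, i < size P -> j < size P -> i != j ->
     forall e, e \in nth [::] P i -> e \notin nth [::] P j).

Definition max_edge_disjoint_paths (P : seq (seq E)) : Prop :=
  edge_disjoint_paths P /\
  forall Q, edge_disjoint_paths Q -> size Q <= size P.

Definition first_in (A : {set E}) (p : seq E) (e : E) : bool :=
  [&& e \in p, e \in A & all (fun f => (f \in A) ==> (index e p <= index f p)) p].
Definition last_in (A : {set E}) (p : seq E) (e : E) : bool :=
  [&& e \in p, e \in A & all (fun f => (f \in A) ==> (index f p <= index e p)) p].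

Definition Smin (P : seq (seq E)) (A : {set E}) : {set E} :=
  [set e | has (fun p => first_in A p e) P].
Definition Smax (P : seq (seq E)) (A : {set E}) : {set E} :=
  [set e | has (fun p => last_in A p e) P].

Definition in_Ulr (k : nat) (C : 'I_k -> {set E}) : Prop :=
  (forall i, min_st_cut (C i)) /\ (forall i j : 'I_k, i < j -> cut_le (C i) (C j)).

Definition Ljoin (P : seq (seq E)) (k : nat) (C1 C2 : 'I_k -> {set E}) : 'I_k -> {set E} :=
  fun i => Smax P (C1 i :|: C2 i).
Definition Lmeet (P : seq (seq E)) (k : nat) (C1 C2 : 'I_k -> {set E}) : 'I_k -> {set E} :=
  fun i => Smin P (C1 i :|: C2 i).

End MinCuts.

Section Dsum.
Variables (E : finType) (k : nat).

Definition mu (C : 'I_k -> {set E}) (e : E) : nat := #|[set i : 'I_k | e \in C i]|.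

Definition Eshr (C : 'I_k -> {set E}) : {set E} := [set e | 2 <= mu C e].

Definition dsum (C : 'I_k -> {set E}) : nat := \sum_(e in Eshr C) 'C(mu C e, 2).

End Dsum.

From mathcomp Require Import all_boot zify.
Set Implicit Arguments. Unset Strict Implicit. Unset Printing Implicit Defensive.

(* Menger's theorem, proved below with augmenting paths for 0/1 flows, bounds the
   size of a minimum s-t cut by |P|; as the paths of P are edge-disjoint and each
   meets every cut, every path of P meets every minimum cut in exactly one edge.
   Fix an edge e.  If e lies on no path of P, it lies in no component of the join
   or the meet.  Otherwise let q be its position on the path p of P through it,
   and a_i, b_i the positions on p of the i-th cuts of C1 and C2; both sequences
   are nondecreasing, and e lies in the i-th component of the join (meet) iff
   q = max (a_i, b_i) (resp. q = min (a_i, b_i)).  Counting binomial(mu_e, 2) as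
   the pairs i < j of components containing e, the inequality reduces, pair by
   pair, to [q = max_i = max_j] + [q = min_i = min_j] <= [q = a_i = a_j] +
   [q = b_i = b_j], which holds for nondecreasing a and b. *)


Lemma card_setI_sum (T : finType) (F A : {set T}) : #|F :&: A| = \sum_(e in F) (e \in A).
Proof.
rewrite (big_setID A) /= [X in _ + X]big1 => [|e /setDP[_ /negPf->] //].
by rewrite addn0 -sum1_card; apply: eq_bigr => e /setIP[_ ->].
Qed.

Section MaxFlowMinCut.
Variables (V E : finType) (src tgt : E -> V) (s t : V).
Implicit Types (F A B X : {set E}) (R : {set V}) (f : E -> V) (e : E) (v x : V) (p : seq E).

Definition deg (f : E -> V) (F : {set E}) (v : V) : nat := \sum_(e in F) (f e == v).

Lemma deg_le_card f F v : deg f F v <= #|F|.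
Proof. by rewrite -sum1_card; apply: leq_sum => e _; apply: leq_b1. Qed.

Lemma deg_setU1 f e F v : e \notin F -> deg f (e |: F) v = (f e == v) + deg f F v.
Proof. exact: big_setU1. Qed.

Lemma deg_setD f A F v : A \subset F -> deg f F v = deg f (F :\: A) v + deg f A v.
Proof. by move=> /setIidPr AF; rewrite /deg (big_setID A) AF addnC. Qed.

Lemma deg_setU f A F v : [disjoint A & F] -> deg f (A :|: F) v = deg f A v + deg f F v.
Proof.
move=> AF; rewrite /deg (big_setID A) setUK; congr (_ + _).
by rewrite setDUl setDv set0U; move: AF; rewrite disjoint_sym => /setDidPl ->.
Qed.

Lemma sum_deg f F (R : {set V}) : \sum_(v in R) deg f F v = \sum_(e in F) (f e \in R).
Proof.
rewrite exchange_big; apply: eq_bigr => e _.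
have [fR | fNR] := boolP (f e \in R).
  by rewrite (bigD1 (f e)) //= eqxx big1 // => v /andP[_ /negPf]; rewrite eq_sym => ->.
by rewrite big1 // => v vR; apply/eqP; rewrite eqb0; apply: contraNneq fNR => ->.
Qed.

Definition leaving (R : {set V}) : {set E} := [set e | (src e \in R) && (tgt e \notin R)].

Lemma walk_leaving R x p : walk_from src tgt x p -> x \in R ->
  last x (map tgt p) \notin R -> exists2 e, e \in p & e \in leaving R.
Proof.
elim: p x => [|e p IHp] x /=; first by move=> _ ->.
move=> /andP[/eqP <- walk_p] srcR lastNR.
have [tgtR | tgtNR] := boolP (tgt e \in R).
  by have [f fp fR] := IHp _ walk_p tgtR lastNR; exists f; rewrite // inE fp orbT.
by exists e; rewrite ?mem_head // inE srcR.
Qed.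

Lemma leaving_cut R : s \in R -> t \notin R -> st_cut src tgt s t (leaving R).
Proof.
move=> sR tNR p /and3P[walk_p /eqP last_p _].
by apply: walk_leaving walk_p sR _; rewrite last_p.
Qed.

Lemma st_cut_neq X : st_cut src tgt s t X -> s != t.
Proof.
move=> cutX; apply/eqP => s_eq_t.
have nil_path : st_path src tgt s t [::] by rewrite /st_path /= s_eq_t eqxx.
by have [e] := cutX _ nil_path.
Qed.

Hypothesis s_neq_t : s != t.

(* A 0/1 flow of value [m], given by the set of edges that carry one unit. *)
Definition flow (F : {set E}) (m : nat) : bool :=
  [forall v, (v != t) ==> (deg src F v == deg tgt F v + (if v == s then m else 0))].

Lemma flowP F m :
  reflect (forall v, v != t -> deg src F v = deg tgt F v + (if v == s then m else 0))
          (flow F m).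
Proof.
apply: (iffP forallP) => [fl v vt | fl v]; first exact/eqP/(implyP (fl v)).
by apply/implyP => /fl ->.
Qed.

Lemma flow_leaving F m R : flow F m -> s \in R -> t \notin R ->
  #|F :&: leaving R| = #|F :&: leaving (~: R)| + m.
Proof.
move=> /flowP fl sR tNR.
have net : \sum_(v in R) deg src F v = \sum_(v in R) deg tgt F v + m.
  have -> : \sum_(v in R) deg src F v = \sum_(v in R) (deg tgt F v + (if v == s then m else 0)).
    by apply: eq_bigr => v vR; apply: fl; apply: contraTneq vR => ->.
  rewrite big_split /= -big_mkcondr (big_pred1 s) // => v /=.
  by case: eqP => [->|]; rewrite ?sR ?andbF.
have crossing : \sum_(e in F) (src e \in R) + #|F :&: leaving (~: R)| =
                \sum_(e in F) (tgt e \in R) + #|F :&: leaving R|.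
  rewrite !card_setI_sum -!big_split; apply: eq_bigr => e _.
  by rewrite !inE; case: (src e \in R); case: (tgt e \in R).
move: net crossing; rewrite !sum_deg; lia.
Qed.

Definition edge_rel F : rel V := fun u v => [exists e in F, (src e == u) && (tgt e == v)].

Lemma edge_rel_walk F x vs : path (edge_rel F) x vs ->
  exists2 p, walk_from src tgt x p /\ map tgt p = vs & {subset p <= F}.
Proof.
elim: vs x => [|y vs IHvs] x /=; first by exists [::].
move=> /andP[/existsP[e /and3P[eF /eqP src_e /eqP tgt_e]] path_vs].
have [p [walk_p tgt_p] pF] := IHvs _ path_vs.
exists (e :: p); first by rewrite /= src_e eqxx tgt_e tgt_p.
by move=> f; rewrite inE => /predU1P[-> | /pF].
Qed.

Lemma connect_st_path F : connect (edge_rel F) s t ->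
  exists2 p, st_path src tgt s t p & {subset p <= F}.
Proof.
move=> /connectP[vs path_vs ->]; case/shortenP: path_vs => vs' path_vs' uniq_vs' _.
have [p [walk_p tgt_p] pF] := edge_rel_walk path_vs'.
by exists p => //; rewrite /st_path walk_p tgt_p eqxx.
Qed.

Lemma flow_connect F m : flow F m.+1 -> connect (edge_rel F) s t.
Proof.
move=> fl; set R := [set v | connect (edge_rel F) s v].
have sR : s \in R by rewrite inE connect0.
apply: contraT => tNR; have := flow_leaving fl sR; rewrite inE => /(_ tNR).
suff -> : F :&: leaving R = set0 by rewrite cards0 addnS.
apply/setP => e; rewrite !inE; apply/negP => /and3P[eF srcR /negP[]].
apply: connect_trans srcR (connect1 _); apply/existsP; exists e; by rewrite eF !eqxx.
Qed.

Lemma walk_deg x p : walk_from src tgt x p -> uniq (x :: map tgt p) -> forall v,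
  deg src [set e in p] v + (last x (map tgt p) == v) = deg tgt [set e in p] v + (x == v).
Proof.
elim: p x => [|e p IHp] x /=; first by move=> _ _ v; rewrite /deg !big_set0.
move=> /andP[/eqP <- walk_p] /andP[_ uniq_p] v.
have eNp : e \notin p by case/andP: uniq_p => tgtNp _; apply: contra tgtNp; apply: map_f.
have -> : [set f in e :: p] = e |: [set f in p] by apply/setP => f; rewrite !inE.
by rewrite !deg_setU1 ?inE //; have := IHp _ walk_p uniq_p v; lia.
Qed.

Lemma flow_setD_path F m p : flow F m.+1 -> st_path src tgt s t p -> {subset p <= F} ->
  flow (F :\: [set e in p]) m.
Proof.
move=> /flowP fl /and3P[walk_p /eqP last_p uniq_p] pF.
have sub : [set e in p] \subset F by apply/subsetP => e; rewrite inE => /pF.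
apply/flowP => v vt; have := fl v vt; have := walk_deg walk_p uniq_p v.
rewrite last_p (deg_setD src _ sub) (deg_setD tgt _ sub) eq_sym (negPf vt) [s == v]eq_sym.
by case: (v == s) => /=; lia.
Qed.

Lemma edge_disjoint_paths_cons p Q : st_path src tgt s t p ->
  edge_disjoint_paths src tgt s t Q -> (forall q e, q \in Q -> e \in p -> e \notin q) ->
  edge_disjoint_paths src tgt s t (p :: Q).
Proof.
move=> st_p [st_Q disj_Q] pNQ; split.
  by move=> q; rewrite inE => /predU1P[-> // | /st_Q].
case=> [|i] [|j] //= ltiQ ltjQ ij e.
- by move=> ep; apply: pNQ ep; rewrite mem_nth.
- by apply: contraTN => ep; apply: pNQ ep; rewrite mem_nth.
- exact: disj_Q.
Qed.

Lemma flow_decomposition m F : flow F m -> exists Q,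
  [/\ size Q = m, edge_disjoint_paths src tgt s t Q & forall q, q \in Q -> {subset q <= F}].
Proof.
elim: m F => [|m IHm] F fl.
  by exists [::]; split => //; split => // i j; rewrite nth_nil.
have [p st_p pF] := connect_st_path (flow_connect fl).
have [Q [size_Q disj_Q QF]] := IHm _ (flow_setD_path fl st_p pF).
exists (p :: Q); split; first by rewrite /= size_Q.
  apply: edge_disjoint_paths_cons => // q e qQ ep.
  by apply/negP => /(QF _ qQ); rewrite !inE ep.
move=> q; rewrite inE => /predU1P[-> // | qQ] e /(QF _ qQ).
by rewrite inE => /andP[].
Qed.

Definition residual F : rel V := fun u v =>
  [exists e, ((e \notin F) && (src e == u) && (tgt e == v)) ||
             ((e \in F) && (tgt e == u) && (src e == v))].

(* [A] collects the edges the residual path traverses forwards, [B] those it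
   traverses backwards. *)
Lemma residual_path_deg F x vs : path (residual F) x vs -> uniq (x :: vs) ->
  exists A B, [/\ [disjoint A & F], B \subset F,
    {in A, forall e, src e \in x :: vs}, {in B, forall e, tgt e \in x :: vs} &
    forall v, deg src A v + deg tgt B v + (last x vs == v) =
              deg tgt A v + deg src B v + (x == v)].
Proof.
elim: vs x => [|y vs IHvs] x /=.
  move=> _ _; exists set0, set0; split; rewrite ?disjoints_subset ?sub0set //.
  - by move=> e; rewrite inE.
  - by move=> e; rewrite inE.
  by move=> v; rewrite /deg !big_set0.
move=> /andP[/existsP[e arc_e] path_vs] /andP[xNvs uniq_vs].
have [A [B [AF BF srcA tgtB bal]]] := IHvs _ path_vs uniq_vs.
have widen (D : {set E}) (g : E -> V) :
    {in D, forall e, g e \in y :: vs} -> {in D, forall e, g e \in x :: y :: vs}.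
  by move=> sub f /sub gf; rewrite inE gf orbT.
case/orP: arc_e => /andP[/andP[eF /eqP end1] /eqP end2].
  have eNA : e \notin A by apply: contra xNvs => /srcA; rewrite end1.
  exists (e |: A), B; split => //; last 2 first.
  - exact: widen.
  - by move=> v; rewrite !deg_setU1 // end1 end2; have := bal v; lia.
  - by rewrite disjoints_subset subUset sub1set inE eF -disjoints_subset.
  - by move=> f; rewrite in_setU1 => /predU1P[-> | /(widen _ _ srcA)//]; rewrite end1 mem_head.
have eNB : e \notin B by apply: contra xNvs => /tgtB; rewrite end1.
exists A, (e |: B); split => //; last 2 first.
- by move=> f; rewrite in_setU1 => /predU1P[-> | /(widen _ _ tgtB)//]; rewrite end1 mem_head.
- by move=> v; rewrite !deg_setU1 // end1 end2; have := bal v; lia.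
- by rewrite subUset sub1set eF.
- exact: widen.
Qed.

Lemma augment F m : flow F m -> connect (residual F) s t -> exists F', flow F' m.+1.
Proof.
move=> /flowP fl /connectP[vs path_vs last_vs].
case/shortenP: path_vs last_vs => vs' path_vs' uniq_vs' _ last_vs'.
have [A [B [AF BF _ _ bal]]] := residual_path_deg path_vs' uniq_vs'.
have AFB : [disjoint A & F :\: B] by apply: disjointWr AF; apply: subsetDl.
exists (A :|: (F :\: B)); apply/flowP => v vt.
have := fl v vt; have := bal v; have := deg_setD src v BF; have := deg_setD tgt v BF.
rewrite !deg_setU // -last_vs' eq_sym (negPf vt) [s == v]eq_sym.
by case: (v == s) => /=; lia.
Qed.

Lemma residual_cut F m : flow F m -> ~~ connect (residual F) s t ->
  exists2 X, st_cut src tgt s t X & #|X| = m.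
Proof.
move=> fl tN; set R := [set v | connect (residual F) s v].
have sR : s \in R by rewrite inE connect0.
have tNR : t \notin R by rewrite inE.
have reach u v : u \in R -> residual F u v -> v \in R.
  by rewrite !inE => su uv; apply: connect_trans su (connect1 uv).
clearbody R.
have leavingF : leaving R \subset F.
  apply/subsetP => e; rewrite inE => /andP[srcR]; apply: contraR => eNF.
  by apply: (reach _ _ srcR); apply/existsP; exists e; rewrite eNF !eqxx.
have enteringNF : F :&: leaving (~: R) = set0.
  apply/setP => e; rewrite !inE negbK; apply/negbTE/and3P => -[eF /negP srcNR tgtR].
  by apply: srcNR (reach _ _ tgtR _); apply/existsP; exists e; rewrite eF !eqxx orbT.
exists (leaving R); first exact: leaving_cut.
by have := flow_leaving fl sR tNR; rewrite enteringNF cards0 (setIidPr leavingF).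
Qed.

Lemma min_cut_le_paths P X : max_edge_disjoint_paths src tgt s t P ->
  min_st_cut src tgt s t X -> #|X| <= size P.
Proof.
move=> [_ maxP] [_ minX].
have flow0 : exists m, [exists F, flow F m].
  by exists 0; apply/existsP; exists set0; apply/flowP => v _; rewrite /deg !big_set0; case: ifP.
have flow_bounded m : [exists F, flow F m] -> m <= #|E|.
  case/existsP => F /flowP /(_ s s_neq_t); rewrite eqxx => deg_s.
  by apply: leq_trans (max_card F); apply: leq_trans (deg_le_card src F s); rewrite deg_s leq_addl.
case: (ex_maxnP flow0 flow_bounded) => m /existsP[F fl] maxm.
have [Q [size_Q disj_Q _]] := flow_decomposition fl.
have [|X' cutX' card_X'] := residual_cut fl.
  apply/negP => /(augment fl)[F' fl'].
  have /maxm : [exists F, flow F m.+1] by apply/existsP; exists F'.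
  by rewrite ltnn.
by rewrite (leq_trans (minX _ cutX')) // card_X' -size_Q maxP.
Qed.

End MaxFlowMinCut.

Lemma leq_max_min_coincidences a1 a2 b1 b2 q : a1 <= a2 -> b1 <= b2 ->
  ((q == maxn a1 b1) && (q == maxn a2 b2)) + ((q == minn a1 b1) && (q == minn a2 b2))
  <= ((q == a1) && (q == a2)) + ((q == b1) && (q == b2)).
Proof. by move=> *; lia. Qed.

Section CutsOnPaths.
Variables (V E : finType) (src tgt : E -> V) (s t : V).
Implicit Types (P : seq (seq E)) (X Y : {set E}) (e x y : E) (p q : seq E).

Lemma edge_disjoint_paths_eq P p q e : edge_disjoint_paths src tgt s t P ->
  p \in P -> q \in P -> e \in p -> e \in q -> p = q.
Proof.
move=> [_ disjP] pP qP ep eq.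
have [ipq | ipq] := eqVneq (index p P) (index q P).
  by rewrite -(nth_index [::] pP) ipq nth_index.
have := disjP _ _ _ _ ipq e; rewrite !index_mem !nth_index // => /(_ pP qP ep).
by rewrite eq.
Qed.

Lemma mem_path_meet p X x e : [set f in p] :&: X = [set x] ->
  (e \in p) && (e \in X) = (e == x).
Proof. by move/setP/(_ e); rewrite !inE. Qed.

Lemma min_cut_meets_path_once P X p : max_edge_disjoint_paths src tgt s t P ->
  min_st_cut src tgt s t X -> p \in P -> exists x, [set f in p] :&: X = [set x].
Proof.
move=> maxP minX pP; have [[stP disjP] _] := maxP; have [cutX _] := minX.
pose n := size P.
have hit (j : 'I_n) : exists e, (e \in X) && (e \in nth [::] P j).
  by have [e ej eX] := cutX _ (stP _ (mem_nth [::] (ltn_ord j))); exists e; rewrite eX.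
pose g j := xchoose (hit j).
have gP j : (g j \in X) && (g j \in nth [::] P j) := xchooseP (hit j).
have g_inj : injective g.
  move=> i j gij; apply/eqP; apply: contraT => ij.
  have /andP[_ gi] := gP i; have /andP[_ gj] := gP j.
  by move: (disjP i j (ltn_ord i) (ltn_ord j) ij _ gi); rewrite gij gj.
have X_img : g @: [set: 'I_n] = X.
  apply/eqP; rewrite eqEcard card_imset // cardsT card_ord.
  rewrite (min_cut_le_paths (st_cut_neq cutX) maxP minX) andbT.
  by apply/subsetP => _ /imsetP[j _ ->]; case/andP: (gP j).
have ip : index p P < n by rewrite index_mem.
exists (g (Ordinal ip)); apply/setP => f; rewrite !inE -X_img.
apply/andP/eqP => [[fp /imsetP[j _ fj]] | ->].
  rewrite fj; apply: f_equal; apply/val_inj/eqP/negP => /negP ji /=.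
  have /andP[_ gj] := gP j.
  by move: (disjP j _ (ltn_ord j) ip ji f); rewrite fj => /(_ gj); rewrite nth_index // -fj fp.
by split; [case/andP: (gP (Ordinal ip)); rewrite /= nth_index | rewrite imset_f].
Qed.

Lemma path_meet_mem p X x : [set f in p] :&: X = [set x] -> x \in p /\ x \in X.
Proof. by move=> pX; apply/andP; rewrite (mem_path_meet _ pX). Qed.

Lemma mem_cut_index p X x e : [set f in p] :&: X = [set x] -> e \in p ->
  (e \in X) = (index e p == index x p).
Proof.
move=> pX ep; have [xp _] := path_meet_mem pX.
by rewrite (inj_in_eq (@index_inj _ e p)) // -(mem_path_meet _ pX) ep.
Qed.

Lemma cut_le_index X Y p x y : cut_le src tgt s t X Y -> st_path src tgt s t p ->
  [set f in p] :&: X = [set x] -> [set f in p] :&: Y = [set y] -> index x p <= index y p.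
Proof.
move=> XY st_p pX pY; have [a [b [ap bp aX bY le_ab]]] := XY p st_p.
by move: aX bY; rewrite (mem_cut_index pX) // (mem_cut_index pY) // => /eqP <- /eqP <-.
Qed.

Lemma all_setU_index p X Y x y (r : pred nat) : [set f in p] :&: X = [set x] ->
  [set f in p] :&: Y = [set y] ->
  all (fun f => (f \in X :|: Y) ==> r (index f p)) p = r (index x p) && r (index y p).
Proof.
move=> pX pY; have [xp xX] := path_meet_mem pX; have [yp yY] := path_meet_mem pY.
apply/allP/andP => [r_XY | [rx ry] f fp]; last first.
  by rewrite inE (mem_cut_index pX) // (mem_cut_index pY) //; apply/implyP => /orP[] /eqP ->.
by split; [apply: implyP (r_XY x xp) _ | apply: implyP (r_XY y yp) _]; rewrite inE ?xX ?yY ?orbT.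
Qed.

Lemma last_in_setU p X Y x y e : [set f in p] :&: X = [set x] ->
  [set f in p] :&: Y = [set y] -> e \in p ->
  last_in (X :|: Y) p e = (index e p == maxn (index x p) (index y p)).
Proof.
move=> pX pY ep; rewrite /last_in ep (all_setU_index (fun i => i <= index e p) pX pY).
by rewrite inE (mem_cut_index pX) // (mem_cut_index pY) //; apply/idP/eqP; lia.
Qed.

Lemma first_in_setU p X Y x y e : [set f in p] :&: X = [set x] ->
  [set f in p] :&: Y = [set y] -> e \in p ->
  first_in (X :|: Y) p e = (index e p == minn (index x p) (index y p)).
Proof.
move=> pX pY ep; rewrite /first_in ep (all_setU_index (leq (index e p)) pX pY).
by rewrite inE (mem_cut_index pX) // (mem_cut_index pY) //; apply/idP/eqP; lia.
Qed.

Lemma mem_Smax_on_path P p A e : p \in P -> {in P, forall q, e \in q -> q = p} ->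
  (e \in Smax P A) = last_in A p e.
Proof.
move=> pP through_e; rewrite inE; apply/hasP/idP => [[q qP lq] | ]; last by exists p.
by rewrite -(through_e q qP) //; case/and3P: lq.
Qed.

Lemma mem_Smin_on_path P p A e : p \in P -> {in P, forall q, e \in q -> q = p} ->
  (e \in Smin P A) = first_in A p e.
Proof.
move=> pP through_e; rewrite inE; apply/hasP/idP => [[q qP fq] | ]; last by exists p.
by rewrite -(through_e q qP) //; case/and3P: fq.
Qed.

Lemma Smax_Smin_shared_le P X1 X2 Y1 Y2 e : max_edge_disjoint_paths src tgt s t P ->
  min_st_cut src tgt s t X1 -> min_st_cut src tgt s t X2 ->
  min_st_cut src tgt s t Y1 -> min_st_cut src tgt s t Y2 ->
  cut_le src tgt s t X1 X2 -> cut_le src tgt s t Y1 Y2 ->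
  ((e \in Smax P (X1 :|: Y1)) && (e \in Smax P (X2 :|: Y2))) +
  ((e \in Smin P (X1 :|: Y1)) && (e \in Smin P (X2 :|: Y2))) <=
  ((e \in X1) && (e \in X2)) + ((e \in Y1) && (e \in Y2)).
Proof.
move=> maxP minX1 minX2 minY1 minY2 leX leY.
have [/hasP[p pP ep] | offP] := boolP (has (fun q => e \in q) P); last first.
  have off (g : pred (seq E)) : (forall q, g q -> e \in q) -> has g P = false.
    by move=> ge; apply: contraNF offP => /hasP[q qP /ge eq]; apply/hasP; exists q.
  by rewrite !inE !off // => q /and3P[].
have through_e : {in P, forall q, e \in q -> q = p}.
  by move=> q qP eq; apply: edge_disjoint_paths_eq maxP.1 qP pP eq ep.
have st_p := maxP.1.1 p pP.
have [x1 pX1] := min_cut_meets_path_once maxP minX1 pP.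
have [x2 pX2] := min_cut_meets_path_once maxP minX2 pP.
have [y1 pY1] := min_cut_meets_path_once maxP minY1 pP.
have [y2 pY2] := min_cut_meets_path_once maxP minY2 pP.
rewrite !(mem_Smax_on_path _ pP through_e) !(mem_Smin_on_path _ pP through_e).
rewrite (last_in_setU pX1 pY1) // (last_in_setU pX2 pY2) //.
rewrite (first_in_setU pX1 pY1) // (first_in_setU pX2 pY2) //.
rewrite (mem_cut_index pX1) // (mem_cut_index pX2) // (mem_cut_index pY1) // (mem_cut_index pY2) //.
apply: leq_max_min_coincidences.
- exact: cut_le_index leX st_p pX1 pX2.
- exact: cut_le_index leY st_p pY1 pY2.
Qed.

End CutsOnPaths.

Lemma bin2_sum_pairs n (b : 'I_n -> bool) :
  'C(\sum_i b i, 2) = \sum_(i < n) \sum_(j < n) [&& i < j, b i & b j].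
Proof.
elim: n b => [|n IHn] b; first by rewrite !big_ord0.
have shift i : \sum_(j < n.+1) [&& lift ord0 i < j, b (lift ord0 i) & b j] =
               \sum_(j < n) [&& i < j, b (lift ord0 i) & b (lift ord0 j)].
  by rewrite big_ord_recl.
have row0 : \sum_(j < n.+1) [&& (ord0 : 'I_n.+1) < j, b ord0 & b j] =
             \sum_(j < n) (b ord0 && b (lift ord0 j)) by rewrite big_ord_recl.
rewrite [in LHS]big_ord_recl [in RHS]big_ord_recl row0.
under [X in _ = _ + X]eq_bigr do rewrite shift.
rewrite -IHn; case: (b ord0) => /=; last by rewrite add0n big1_eq.
by rewrite add1n binS bin1 addnC.
Qed.

Lemma dsum_pairs (E : finType) k (C : 'I_k -> {set E}) :
  dsum C = \sum_e \sum_(i < k) \sum_(j < k) [&& i < j, e \in C i & e \in C j].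
Proof.
rewrite /dsum big_mkcond /=; apply: eq_bigr => e _; rewrite inE.
have -> : mu C e = \sum_i (e \in C i).
  by rewrite /mu -sum1_card big_mkcond; apply: eq_bigr => i _; rewrite inE.
by rewrite -bin2_sum_pairs; case: leqP => // lt2; rewrite bin_small.
Qed.

Theorem theorem6 (V E : finType) (src tgt : E -> V) (s t : V) (k : nat)
  (P : seq (seq E)) (C1 C2 : 'I_k -> {set E}) :
  1 <= k ->
  max_edge_disjoint_paths src tgt s t P ->
  in_Ulr src tgt s t C1 -> in_Ulr src tgt s t C2 ->
  dsum (Ljoin P C1 C2) + dsum (Lmeet P C1 C2) <= dsum C1 + dsum C2.
Proof.
move=> _ maxP [min1 le1] [min2 le2].
rewrite !dsum_pairs -!big_split leq_sum // => e _.
rewrite -!big_split leq_sum // => i _; rewrite -!big_split leq_sum // => j _ /=.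
case: ltnP => //= ij.
exact: Smax_Smin_shared_le maxP (min1 i) (min1 j) (min2 i) (min2 j) (le1 i j ij) (le2 i j ij).
Qed.
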